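(* Let $V=(\mathbb F_2)^n$ with $n=bs$, decomposed into bricks $V=V_1\oplus\cdots\oplus V_b$, $\dim V_j=s$. Let $r\ge2$ and $\rho_1,\dots,\rho_r\in\mathrm{Sym}(V)$, and let $\Phi$ be the $r$-round Feistel network whose $i$-th round applies the Feistel operator $\bar\rho_i$. Assume that for every $1\le i\le r$, $0\rho_i=0$ and $\rho_i=\gamma_i\lambda_i$, where \begin{enumerate} \item[a)] $\gamma_i$ is a parallel map whose S-boxes are weakly $2^\delta$-uniform and strongly $\delta$-anti-invariant, for some $\delta<s$; \item[b)] $\lambda_i$ is a linear strongly proper diffusion layer. \end{enumerate} Suppose there exists a sequence of $r+1$ non-trivial linear partitions $\mathcal L(\mathcal U_1),\dots,\mathcal L(\mathcal U_{r+1})$ of $V\times V$, where each $\mathcal U_i$ is a proper non-trivial subgroup of $V\times V$ and $\mathcal L(\mathcal U_i)\bar\rho_i=\mathcal L(\mathcal U_{i+1})$ for all $1\le i\le r$. For each $i$ let $A_i=\{a\in V\mid (a,c)\in\mathcal U_i\text{ for some }c\in V\}$ and $D_i=\{d\in V\mid (0,d)\in\mathcal U_i\}$. Then none of the following conditions holds: \begin{enumerate} \item there exists $1\le i\le r-1$ such that $\mathcal L(\mathcal U_{i+1})\bar\rho_{i+1}=\mathcal L(\mathcal U_i)$; \item there exists $1\le i\le r-1$ such that $\mathcal U_i=A_i\times D_i$, $\mathcal U_{i+1}=A_{i+1}\times D_{i+1}$ and $\mathcal U_{i+2}=A_{i+2}\times D_{i+2}$; \item there exists $1\le i\le r$ such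 that $D_i=\{0\}$ and $D_{i+1}=\{0\}$; \item there exists $1\le i\le r$ such that $A_i=\{0\}$ and $A_{i+1}=\{0\}$. \end{enumerate}
   Context: Maps act on the right and are composed left to right ($\gamma\lambda$ means first $\gamma$, then $\lambda$); $+$ is bitwise XOR. The Feistel operator induced by $\rho\in\mathrm{Sym}(V)$ is $\bar\rho:V\times V\to V\times V$, $(x_1,x_2)\bar\rho=(x_2,\ x_1+x_2\rho)$. A wall is a subspace $\bigoplus_{j\in I}V_j$ with $\emptyset\ne I\subsetneq\{1,\dots,b\}$. A parallel map is $\gamma\in\mathrm{Sym}(V)$ acting brickwise, $\gamma=(\gamma^{(1)},\dots,\gamma^{(b)})$ with $\gamma^{(j)}\in\mathrm{Sym}(V_j)$ (its S-boxes, viewed as permutations of $(\mathbb F_2)^s$). A linear $\lambda\in\mathrm{GL}(V)$ is a strongly proper diffusion layer if there are no walls $W,W'$ with $W\lambda=W'$. A map $f\in\mathrm{Sym}((\mathbb F_2)^s)$ is weakly $d$-uniform if for each $a\ne0$, $|\{xf+(x+a)f\mid x\in(\mathbb F_2)^s\}|>2^{s-1}/d$. For $1\le\epsilon<s$, $f$ with $0f=0$ is strongly $\epsilon$-anti-invariant if for all proper non-trivial subspaces $U,W$ of $(\mathbb F_2)^s$, $Uf=W$ implies $\dim U=\dim W<s-\epsilon$. For a subgroup $\mathcal U$ of $V\times V$, $\mathcal L(\mathcal U)=\{\mathcal U+v\mid v\in V\times V\}$ (non-trivial if neither the partition into singletons nor $\{V\times V\}$), and $\mathcal A f=\{Af\mid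 A\in\mathcal A\}$ for a partition $\mathcal A$. *)

From HB Require Import structures.
From mathcomp Require Import all_boot all_order all_fingroup all_algebra.
Set Implicit Arguments. Unset Strict Implicit. Unset Printing Implicit Defensive.
Import GRing.Theory.
Local Open Scope ring_scope.

(* A brick V_j = (F_2)^s, and the state space V = V_1 (+) ... (+) V_b,
   represented as functions from the brick index set 'I_b to bricks. *)
Notation brick s := 'rV['F_2]_s.
Notation state b s := {ffun 'I_b -> brick s}.

(* Maps act on the right; for permutations, (g * l)%g x = l (g x) (permM),
   i.e. gamma*lambda means "first gamma, then lambda". *)

Definition feistel b s (rho : {perm state b s}) (x : state b s * state b s)
  : state b s * state b s := (x.2, x.1 + rho x.2).

Definition parallel_with b s (g : {perm state b s}) (P : {perm brick s} -> Prop) :=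
  exists S : 'I_b -> {perm brick s},
    (forall j, P (S j)) /\ (forall (x : state b s) (j : 'I_b), g x j = S j (x j)).

Definition weakly_uniform s (d : nat) (f : {perm brick s}) :=
  forall a : brick s, a != 0 ->
    ((2 ^ (s - 1))%:R / d%:R < #|[set f x + f (x + a) | x : brick s]|%:R :> rat).

(* strongly e-anti-invariant (the side condition 1 <= e < s is imposed where used) *)
Definition strongly_anti_invariant s (e : nat) (f : {perm brick s}) :=
  f 0 = 0 /\
  forall U W : {vspace brick s},
    U != 0%VS -> U != fullv -> W != 0%VS -> W != fullv ->
    f @: [set x | x \in U] = [set x | x \in W] ->
    \dim U = \dim W /\ (\dim W < s - e)%N.

Definition wall b s (I : {set 'I_b}) : {set state b s} :=
  [set x : state b s | [forall j, (j \notin I) ==> (x j == 0)]].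

Definition is_wall_index b (I : {set 'I_b}) := I != set0 /\ I != setT.

Definition strongly_proper b s (l : {perm state b s}) :=
  ~ exists I I' : {set 'I_b}, is_wall_index I /\ is_wall_index I' /\
      l @: wall s I = wall s I'.

Definition is_linear b s (l : {perm state b s}) :=
  forall (a : 'F_2) (x y : state b s), l (a *: x + y) = a *: l x + l y.

Definition is_subgroup b s (U : {set state b s * state b s}) :=
  0 \in U /\ {in U &, forall x y, x - y \in U}.

Definition lin_part b s (U : {set state b s * state b s})
  : {set {set state b s * state b s}} :=
  [set (fun u : state b s * state b s => u + v) @: U | v : state b s * state b s].

Definition part_image b s (rho : {perm state b s})
  (P : {set {set state b s * state b s}}) : {set {set state b s * state b s}} :=
  (fun X : {set state b s * state b s} => feistel rho @: X) @: P.

Definition Aset b s (U : {set state b s * state b s}) : {set state b s} :=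
  [set a | [exists c, (a, c) \in U]].

Definition Dset b s (U : {set state b s * state b s}) : {set state b s} :=
  [set d | (0, d) \in U].

From HB Require Import structures.
From mathcomp Require Import all_boot all_order all_fingroup all_algebra all_field.
From mathcomp Require Import zify.
Set Implicit Arguments. Unset Strict Implicit. Unset Printing Implicit Defensive.
Import GRing.Theory Num.Theory.
Local Open Scope ring_scope.

(* Since rho_i(0) = 0, the identity L(U_i) rhobar_i = L(U_(i+1)) says that the Feistel
   operator maps the subgroup U_i onto U_(i+1), and the difference of the images of any two
   points of a coset of U_i into U_(i+1). Read on the pairs (0, d) and (a, 0) this gives
   D_(i+1) = E_i, where E = {a | (a, 0) in U}. If the next round mapped L(U_(i+1)) back
   onto L(U_i), then rho_i would map D_i onto E_i, and every derivative x |-> rho_i(t + x)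
   + rho_i(x) with t in D_i would take values in E_i. On each brick met by D_i, the S-box
   maps the slice of D_i onto the slice of gamma_i(D_i); weak 2^delta-uniformity makes the
   latter larger than 2^(s-1-delta), which strong delta-anti-invariance only allows for the
   full brick. So D_i and E_i are walls and lambda_i maps one onto the other, against
   strong properness. On product subgroups the Feistel operator swaps the two factors, so
   condition 2 gives U_(i+2) = U_i and reduces to condition 1. Condition 3 fails because a
   nonzero element of U_i yields, through one S-box derivative, a nonzero element of
   D_(i+1); condition 4 because A_i = A_(i+1) = 0 forces U_i = 0. *)

Local Notation state2 b s := (state b s * state b s)%type.

Lemma addrr_F2 (V : lmodType 'F_2) (x : V) : x + x = 0.
Proof. by rewrite -{1 2}[x]scale1r -scalerDl (_ : 1 + 1 = 0) ?scale0r //; apply/eqP. Qed.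

Lemma oppr_F2 (V : lmodType 'F_2) (x : V) : - x = x.
Proof. by rewrite -[- x]add0r -(addrr_F2 x) addrK. Qed.

Lemma addrK_F2 (V : lmodType 'F_2) (x y : V) : x + y + y = x.
Proof. by rewrite -addrA addrr_F2 addr0. Qed.

Lemma set1_neq_exists (T : finType) (A : {set T}) x :
  x \in A -> A != [set x] -> exists2 y, y \in A & y != x.
Proof.
move=> xA; rewrite eqEsubset sub1set xA andbT => /subsetPn[y yA].
by rewrite inE => yx; exists y.
Qed.

Lemma imset_permT (T : finType) (p : {perm T}) : p @: setT = setT.
Proof. by apply/eqP; rewrite eqEcard subsetT card_imset ?leqnn //; apply: perm_inj. Qed.

Lemma card_vspace_F2 s (U : {vspace brick s}) : #|[set x | x \in U]| = (2 ^ \dim U)%N.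
Proof. by rewrite cardsE card_vspace card_Fp. Qed.

Lemma addr_closed_vspace s (P : {set brick s}) :
  addr_closed P -> exists U : {vspace brick s}, P = [set x | x \in U].
Proof.
move=> [P0 PD]; exists <<in_tuple (enum P)>>%VS; apply/setP => x; rewrite inE.
apply/idP/idP => [xP | /coord_span ->]; first by apply: memv_span; rewrite mem_enum.
apply: (big_ind (fun z => z \in P)) => // i _.
have : (in_tuple (enum P))`_i \in P by rewrite -mem_enum; apply: mem_nth.
rewrite -[coord _ i x]natr_Zp scaler_nat.
by elim: (nat_of_ord (coord _ i x)) => [|n IH] vP; rewrite ?mulr0n // mulrS PD ?IH.
Qed.

Lemma weakly_uniform_card s delta (f : {perm brick s}) (a : brick s) :
  (delta < s)%N -> weakly_uniform (2 ^ delta) f -> a != 0 ->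
  (2 ^ (s - 1 - delta) < #|[set (f x + f (x + a))%R | x : brick s]|)%N.
Proof.
move=> delta_lt fu a0; have := fu a a0.
have -> : (2 ^ (s - 1))%:R / (2 ^ delta)%:R = (2 ^ (s - 1 - delta))%:R :> rat.
  rewrite -{1}(@subnK delta (s - 1)); last lia.
  by rewrite expnD natrM mulfK // pnatr_eq0 expn_eq0.
by rewrite ltr_nat.
Qed.

Lemma weakly_uniform_nonaffine s delta (f : {perm brick s}) a :
  (delta < s)%N -> weakly_uniform (2 ^ delta) f -> a != 0 ->
  exists x, f (a + x) + f x + f a != 0.
Proof.
move=> delta_lt fu a0; apply/existsP; apply: contraT; rewrite negb_exists => /forallP all0.
have : [set (f x + f (x + a))%R | x : brick s] \subset [set f a].
  apply/subsetP => _ /imsetP[x _ ->]; have /negPn/eqP e := all0 x.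
  by rewrite inE -[f a]add0r -e addrK_F2 addrC (addrC x).
move/subset_leq_card; rewrite cards1.
have := weakly_uniform_card delta_lt fu a0; have := expn_gt0 2 (s - 1 - delta); lia.
Qed.

Lemma anti_invariant_preimage_full s delta (f : {perm brick s}) (R Q : {set brick s}) a :
  (delta < s)%N -> weakly_uniform (2 ^ delta) f -> strongly_anti_invariant delta f ->
  addr_closed R -> addr_closed Q -> f @: R = Q -> a != 0 ->
  (forall x, f (a + x) + f x + f a \in Q) -> R = setT.
Proof.
move=> delta_lt fu [_ f_anti] /addr_closed_vspace[UR ->] /addr_closed_vspace[UQ ->].
move=> fRQ a0 Qdiff.
have dimUQ : (s - delta <= \dim UQ)%N.
  have : (2 ^ (s - 1 - delta) < 2 ^ \dim UQ)%N.
    rewrite -card_vspace_F2; apply: leq_trans (weakly_uniform_card delta_lt fu a0) _.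
    rewrite -(card_imset _ (addIr (f a))); apply/subset_leq_card/subsetP.
    by move=> _ /imsetP[_ /imsetP[x _ ->] ->]; rewrite (addrC (f x)) (addrC x).
  by rewrite ltn_exp2l //; lia.
have dimUR : \dim UR = \dim UQ.
  apply/eqP; rewrite -(@eqn_exp2l 2) // -!card_vspace_F2 -fRQ card_imset //.
  exact: perm_inj.
apply/setP => x; rewrite in_setT inE; apply: contraT => xUR.
have URT : UR != fullv by apply: contraNneq xUR => ->; rewrite memvf.
have UQT : UQ != fullv.
  by apply: contraNneq URT => UQf; rewrite eqEdim subvf dimUR UQf leqnn.
have UR0 : UR != 0%VS by rewrite -dimv_eq0 dimUR; lia.
have UQ0 : UQ != 0%VS by rewrite -dimv_eq0; lia.
have [_] := f_anti UR UQ UR0 URT UQ0 UQT fRQ.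
lia.
Qed.

Lemma pairD (U V : nmodType) (a a' : U) (c c' : V) :
  (a, c) + (a', c') = (a + a', c + c') :> U * V.
Proof. by []. Qed.

Definition Eset b s (U : {set state2 b s}) : {set state b s} :=
  [set a | (a, 0) \in U].

Section Subgroups.
Variables b s : nat.
Implicit Type X : {set state2 b s}.

Lemma subgroup_addr_closed X : is_subgroup X -> addr_closed X.
Proof. by case=> X0 XB; split=> // x y xX yX; rewrite -[y]oppr_F2; apply: XB. Qed.

Lemma addr_closed_translate X v :
  addr_closed X -> v \in X -> (fun u : state2 b s => u + v) @: X = X.
Proof.
move=> [_ XD] vX; apply/eqP; rewrite eqEcard card_imset ?leqnn ?andbT; last exact: addIr.
by apply/subsetP => _ /imsetP[u uX ->]; apply: XD.
Qed.

Lemma Dset_addr_closed X : is_subgroup X -> addr_closed (Dset X).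
Proof.
move/subgroup_addr_closed=> [X0 XD]; split=> [|x y]; rewrite !inE // => xX yX.
by have := XD _ _ xX yX; rewrite pairD addr0.
Qed.

Lemma Eset_addr_closed X : is_subgroup X -> addr_closed (Eset X).
Proof.
move/subgroup_addr_closed=> [X0 XD]; split=> [|x y]; rewrite !inE // => xX yX.
by have := XD _ _ xX yX; rewrite pairD addr0.
Qed.

Lemma subgroup_setT X : is_subgroup X -> Dset X = setT -> Eset X = setT -> X = setT.
Proof.
move/subgroup_addr_closed=> [_ XD] DT ET; apply/setP => [[a c]]; rewrite in_setT.
have /[!inE] aX : a \in Eset X by rewrite ET.
have /[!inE] cX : c \in Dset X by rewrite DT.
by have := XD _ _ aX cX; rewrite pairD addr0 add0r.
Qed.

End Subgroups.

Section FeistelPartitions.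
Variables (b s : nat) (rho : {perm state b s}).
Local Notation F := (feistel rho).

Lemma feistel_inj : injective F.
Proof. by case=> [x1 x2] [y1 y2] [-> /addIr ->]. Qed.

Lemma feistel0 : rho 0 = 0 -> F 0 = 0.
Proof. by move=> rho0; rewrite /feistel /= rho0 addr0. Qed.

Variables X Y : {set state2 b s}.
Hypotheses (subX : is_subgroup X) (subY : is_subgroup Y).
Hypothesis XY : part_image rho (lin_part X) = lin_part Y.

Lemma feistel_coset_diff u v : u \in X -> F (u + v) + F v \in Y.
Proof.
move=> uX; have [X0 _] := subX.
have : F @: ((fun w : state2 b s => w + v) @: X) \in lin_part Y.
  by rewrite -XY; apply/imset_f/imset_f.
case/imsetP=> w _ Ew.
have coset z : z \in X -> F (z + v) \in (fun y : state2 b s => y + w) @: Y.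
  by move=> zX; rewrite -Ew; apply/imset_f/imset_f.
case/imsetP: (coset u uX) => y1 y1Y ->; case/imsetP: (coset 0 X0) => y2 y2Y.
rewrite add0r => ->; rewrite addrACA addrr_F2 addr0.
by case: (subgroup_addr_closed subY) => _; apply.
Qed.

Hypothesis rho0 : rho 0 = 0.

Lemma feistel_subgroup : F @: X = Y.
Proof.
have Xc := subgroup_addr_closed subX; have [Y0 _] := subY.
have : Y \in part_image rho (lin_part X).
  rewrite XY; apply/imsetP; exists 0; rewrite // addr_closed_translate //.
  exact: subgroup_addr_closed.
(* The block of L(Y) through 0 is the image of a coset X + v through 0 = F^-1(0), i.e. of X. *)
case/imsetP=> _ /imsetP[v _ ->] EY; rewrite EY.
move: Y0; rewrite EY => /imsetP[_ /imsetP[x xX ->]].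
move/esym; rewrite -(feistel0 rho0) => /feistel_inj xv0.
have -> : v = x by rewrite -[v]add0r -xv0 addrK_F2.
by rewrite addr_closed_translate.
Qed.

Lemma mem_feistel u : u \in X -> F u \in Y.
Proof. by rewrite -feistel_subgroup; apply: imset_f. Qed.

Lemma Dset_feistel : Dset Y = Eset X.
Proof.
apply/setP=> d; rewrite !inE -feistel_subgroup; apply/imsetP/idP.
  by case=> [[x1 x2] xX [x20 ->]]; move: xX; rewrite -x20 rho0 addr0.
by exists (d, 0); rewrite // /feistel /= rho0 addr0.
Qed.

Lemma Dset_feistel_derivative c d (x : state b s) :
  (c, d) \in X -> rho (d + x) + rho x + rho d \in Dset Y.
Proof.
move=> cdX; have [_ YD] := subgroup_addr_closed subY.
have := YD _ _ (feistel_coset_diff (0, x) cdX) (mem_feistel cdX).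
rewrite /feistel !pairD !add0r addrK_F2 addrr_F2 inE.
by rewrite addr0 -(addrA c) addrACA addrr_F2 add0r.
Qed.

Lemma Dset_Eset_feistel d : d \in Dset X -> d \in Eset Y -> rho d \in Dset Y.
Proof.
rewrite !inE => dX dY; have [_ YD] := subgroup_addr_closed subY.
have := YD _ _ (mem_feistel dX) dY.
by rewrite /feistel pairD add0r addrr_F2 addr0.
Qed.

Lemma product_feistel :
  X = setX (Aset X) (Dset X) -> Aset Y = Dset X /\ Dset Y = Aset X.
Proof.
move=> XAD; rewrite Dset_feistel; split; apply/setP => a; rewrite !inE.
  apply/existsP/idP => [[c] | aX]; last by exists (0 + rho a); apply: (mem_feistel aX).
  rewrite -feistel_subgroup => /imsetP[[x1 x2] + [-> _]].
  by rewrite {1}XAD inE => /andP[_]; rewrite inE.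
apply/idP/existsP => [aX | [c acX]]; first by exists 0.
by rewrite XAD !inE /=; apply/andP; split; [apply/existsP; exists c | case: subX].
Qed.

Lemma Aset0_feistel :
  Aset X = [set 0 : state b s] -> Aset Y = [set 0 : state b s] -> X = [set 0 : state2 b s].
Proof.
move=> AX0 AY0; apply/setP => [[a c]]; rewrite inE.
apply/idP/eqP => [acX | ->]; last by case: subX.
have /[!(AX0, inE)] /eqP a0 : a \in Aset X by rewrite inE; apply/existsP; exists c.
have /[!(AY0, inE)] /eqP c0 : c \in Aset Y.
  by rewrite inE; apply/existsP; exists (a + rho c); apply: (mem_feistel acX).
by rewrite a0 c0.
Qed.

End FeistelPartitions.

Lemma feistel_round_trip b s (rho rho' : {perm state b s}) (X Y : {set state2 b s}) :
  rho 0 = 0 -> rho' 0 = 0 -> is_subgroup X -> is_subgroup Y ->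
  part_image rho (lin_part X) = lin_part Y -> part_image rho' (lin_part Y) = lin_part X ->
  rho @: Dset X = Eset X /\ (forall t x, t \in Dset X -> rho (t + x) + rho x \in Eset X).
Proof.
move=> rho0 rho'0 subX subY XY YX.
have DY := Dset_feistel subX subY XY rho0; have DX := Dset_feistel subY subX YX rho'0.
have DXE : rho @: Dset X \subset Eset X.
  apply/subsetP => _ /imsetP[d dX ->]; rewrite -DY.
  by apply: (Dset_Eset_feistel subX subY XY) => //; rewrite -DX.
have EXD : rho' @: Eset X \subset Dset X.
  apply/subsetP => _ /imsetP[d dX ->].
  by apply: (Dset_Eset_feistel subY subX YX) => //; rewrite DY.
have [_ ED] := Eset_addr_closed subX.
split=> [|t x tX].
  apply/eqP; rewrite eqEcard DXE card_imset /=; last exact: perm_inj.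
  by apply: leq_trans (subset_leq_card EXD); rewrite card_imset //; apply: perm_inj.
have t0X : (0, t) \in X by rewrite inE in tX.
have := Dset_feistel_derivative subX subY XY rho0 x t0X.
rewrite DY => /ED /(_ (subsetP DXE _ (imset_f rho tX))).
by rewrite addrK_F2.
Qed.

Section Bricks.
Variables b s : nat.

Definition brick_embed (j : 'I_b) (v : brick s) : state b s :=
  [ffun k => if k == j then v else 0].

Definition brick_slice (j : 'I_b) (T : {set state b s}) : {set brick s} :=
  [set v | brick_embed j v \in T].

Lemma brick_embedD j : {morph brick_embed j : u v / u + v}.
Proof. by move=> u v; apply/ffunP => k; rewrite !ffunE; case: eqP; rewrite ?addr0. Qed.

Lemma brick_embed0 j : brick_embed j 0 = 0.
Proof. by apply/ffunP => k; rewrite !ffunE; case: eqP. Qed.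

Lemma brick_embed_eq0 j v : (brick_embed j v == 0) = (v == 0).
Proof.
apply/eqP/eqP => [/ffunP/(_ j) | ->]; last exact: brick_embed0.
by rewrite !ffunE eqxx.
Qed.

Lemma state_sum_bricks (x : state b s) : x = \sum_j brick_embed j (x j).
Proof.
apply/ffunP => k; rewrite sum_ffunE (bigD1 k) //= big1 ?addr0 ?ffunE ?eqxx // => j jk.
by rewrite ffunE eq_sym (negPf jk).
Qed.

Lemma brick_slice_addr_closed j (T : {set state b s}) :
  addr_closed T -> addr_closed (brick_slice j T).
Proof.
by case=> T0 TD; split=> [|u v]; rewrite !inE ?brick_embed0 ?brick_embedD //; apply: TD.
Qed.

Lemma wall0 : wall s (set0 : {set 'I_b}) = [set 0 : state b s].
Proof.
apply/setP => x; rewrite !inE; apply/forallP/eqP => [x0 | -> j].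
  by apply/ffunP => j; rewrite ffunE; apply/eqP/(implyP (x0 j)); rewrite inE.
by rewrite ffunE eqxx implybT.
Qed.

Lemma wallT : wall s (setT : {set 'I_b}) = setT.
Proof. by apply/setP => x; rewrite !inE; apply/forallP => j; rewrite inE. Qed.

Lemma is_wall_index_wall (T : {set state b s}) I :
  T = wall s I -> T != [set 0 : state b s] -> T != setT -> is_wall_index I.
Proof.
move=> -> W0 WT; split.
  by apply: contraNneq W0 => ->; rewrite wall0.
by apply: contraNneq WT => ->; rewrite wallT.
Qed.

Lemma wall_support (T : {set state b s}) :
  addr_closed T -> (forall j t, t \in T -> t j != 0 -> brick_slice j T = setT) ->
  T = wall s [set j | [exists t in T, t j != 0]].
Proof.
move=> [T0 TD] full; set I := [set j | _]; apply/setP => x; rewrite inE.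
apply/idP/forallP => [xT j | xI].
  by apply/implyP; apply: contraNT => xj; rewrite inE; apply/existsP; exists x; rewrite xT.
rewrite [x]state_sum_bricks; apply: (big_ind (fun z => z \in T)) => // j _.
have [/[!inE]/existsP[t /andP[tT tj]] | /(implyP (xI j))/eqP ->] := boolP (j \in I).
  by have /setP/(_ (x j)) := full j t tT tj; rewrite !inE.
by rewrite brick_embed0.
Qed.

End Bricks.

Section ParallelMap.
Variables (b s : nat) (g : {perm state b s}) (S : 'I_b -> {perm brick s}).
Hypothesis gE : forall x j, g x j = S j (x j).
Hypothesis S0 : forall j, S j 0 = 0.
Implicit Types T U : {set state b s}.

Lemma parallel_embed j v : g (brick_embed j v) = brick_embed j (S j v).
Proof. by apply/ffunP => k; rewrite gE !ffunE; case: eqP => [-> | _]. Qed.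

Lemma parallel_embed_diff t j x :
  g (t + brick_embed j x) + g (brick_embed j x) + g t =
  brick_embed j (S j (t j + x) + S j x + S j (t j)).
Proof.
apply/ffunP => k; rewrite !ffunE !gE !ffunE.
by case: eqP => [-> // | _]; rewrite addr0 S0 addr0 addrr_F2.
Qed.

Lemma parallel_wall I : g @: wall s I = wall s I.
Proof.
apply/eqP; rewrite eqEcard card_imset ?leqnn ?andbT; last exact: perm_inj.
apply/subsetP => _ /imsetP[x /[!inE] /forallP xI ->]; apply/forallP => j.
by apply/implyP => jI; rewrite gE (eqP (implyP (xI j) jI)) S0.
Qed.

Lemma parallel_slice j T U : g @: T = U -> S j @: brick_slice j T = brick_slice j U.
Proof.
move=> gT; apply/setP => v; rewrite inE -gT; apply/imsetP/imsetP.
  by case=> w /[!inE] wT ->; exists (brick_embed j w); rewrite ?parallel_embed.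
case=> t tT embv; exists ((S j)^-1 v)%g; last by rewrite permKV.
rewrite inE; suff -> : brick_embed j ((S j)^-1 v)%g = t by [].
by apply: (@perm_inj _ g); rewrite parallel_embed permKV.
Qed.

Variable delta : nat.
Hypothesis delta_lt_s : (delta < s)%N.
Hypothesis S_uniform : forall j, weakly_uniform (2 ^ delta) (S j).
Hypothesis S_anti : forall j, strongly_anti_invariant delta (S j).

Lemma parallel_derivative_wall T U :
  addr_closed T -> addr_closed U -> g @: T = U ->
  (forall t x, t \in T -> g (t + x) + g x \in U) ->
  T = wall s [set j | [exists t in T, t j != 0]].
Proof.
move=> Tc Uc gT Tdiff; apply: wall_support => // j t tT tj.
have [_ UD] := Uc.
apply: (anti_invariant_preimage_full delta_lt_s (S_uniform j) (S_anti j)) tj _.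
- exact: brick_slice_addr_closed.
- exact: (brick_slice_addr_closed j Uc).
- exact: parallel_slice.
move=> x; rewrite inE -parallel_embed_diff; apply: UD; first exact: Tdiff.
by rewrite -gT imset_f.
Qed.

Lemma parallel_derivative_neq0 a : a != 0 -> exists x, g (a + x) + g x + g a != 0.
Proof.
move=> a0; have [j aj] : exists j, a j != 0.
  apply/existsP; apply: contraR a0 => /existsPn a0.
  by apply/eqP/ffunP => j; rewrite ffunE; apply/eqP/negPn/a0.
have [x Sx] := weakly_uniform_nonaffine delta_lt_s (S_uniform j) aj.
by exists (brick_embed j x); rewrite parallel_embed_diff brick_embed_eq0.
Qed.

End ParallelMap.

Definition spn_round b s delta (rho gamma lambda : {perm state b s}) :=
  [/\ rho 0 = 0, rho = (gamma * lambda)%g,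
      parallel_with gamma
        (fun f => weakly_uniform (2 ^ delta) f /\ strongly_anti_invariant delta f),
      is_linear lambda & strongly_proper lambda].

Section SPNRound.
Variables (b s delta : nat) (rho gamma lambda : {perm state b s}).
Hypothesis delta_lt_s : (delta < s)%N.
Hypothesis round : spn_round delta rho gamma lambda.

Lemma spn_roundE x : rho x = lambda (gamma x).
Proof. by case: round => _ -> *; rewrite permM. Qed.

Lemma spn_round_linearD : {morph lambda : x y / x + y}.
Proof. by case: round => _ _ _ lin _ x y; have := lin 1 x y; rewrite !scale1r. Qed.

Lemma spn_round_linear0 : lambda 0 = 0.
Proof. by apply: (addIr (lambda 0)); rewrite -spn_round_linearD !addr0 add0r. Qed.

Lemma spn_round_wall (T U : {set state b s}) :
  addr_closed T -> addr_closed U -> rho @: T = U ->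
  (forall t x, t \in T -> rho (t + x) + rho x \in U) ->
  exists I, T = wall s I /\ lambda @: wall s I = U.
Proof.
have [_ _ [S [S_good gE]] _ _] := round.
have S0 j : S j 0 = 0 by have [_ []] := S_good j.
have S_uniform j := (S_good j).1; have S_anti j := (S_good j).2.
move=> Tc [U0 UD] rT Tdiff; pose V := lambda @^-1: U.
have Vc : addr_closed V.
  by split=> [|x y]; rewrite !inE ?spn_round_linear0 ?spn_round_linearD //; apply: UD.
have gT : gamma @: T = V.
  apply/setP => y; rewrite inE -rT -(mem_imset _ _ (@perm_inj _ lambda)) -imset_comp.
  by rewrite (eq_imset _ spn_roundE).
have Vdiff t x : t \in T -> gamma (t + x) + gamma x \in V.
  by move=> tT; rewrite inE spn_round_linearD -!spn_roundE Tdiff.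
have TI := parallel_derivative_wall gE S0 delta_lt_s S_uniform S_anti Tc Vc gT Vdiff.
exists [set j | [exists t in T, t j != 0]]; split => //.
by rewrite -(parallel_wall gE S0) -TI -rT -imset_comp (eq_imset _ spn_roundE).
Qed.

Lemma Dset_feistel_neq0 (X Y : {set state2 b s}) :
  is_subgroup X -> is_subgroup Y -> part_image rho (lin_part X) = lin_part Y ->
  X != [set 0 : state2 b s] -> Dset Y != [set 0 : state b s].
Proof.
move=> subX subY XY; have [rho0 _ [S [S_good gE]] _ _] := round.
have S0 j : S j 0 = 0 by have [_ []] := S_good j.
have S_uniform j := (S_good j).1.
case/(set1_neq_exists subX.1) => [[c a] caX ca0].
have DY0 z : z \in Dset Y -> z != 0 -> Dset Y != [set 0 : state b s].
  by move=> zY; apply: contra_neq => DY; move: zY; rewrite DY inE => /eqP.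
have [a0 | /(parallel_derivative_neq0 gE S0 delta_lt_s S_uniform)[x gx]] := eqVneq a 0.
  apply: (DY0 c); last by apply: contraNneq ca0 => c0; rewrite c0 a0.
  by rewrite (Dset_feistel subX subY XY rho0) inE -a0.
apply: DY0 (Dset_feistel_derivative subX subY XY rho0 x caX) _.
rewrite !spn_roundE -!spn_round_linearD -spn_round_linear0.
by apply: contra_neq gx => /perm_inj.
Qed.

End SPNRound.

Lemma no_round_trip b s delta (rho gamma lambda rho' gamma' lambda' : {perm state b s})
  (X Y : {set state2 b s}) :
  (delta < s)%N -> spn_round delta rho gamma lambda -> spn_round delta rho' gamma' lambda' ->
  is_subgroup X -> is_subgroup Y -> X != [set 0 : state2 b s] -> X != setT ->
  part_image rho (lin_part X) = lin_part Y -> part_image rho' (lin_part Y) = lin_part X ->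
  False.
Proof.
move=> delta_lt_s round round' subX subY X0 XT XY YX.
have [rho0 _ _ _ lambda_proper] := round; have [rho'0 _ _ _ _] := round'.
have DY := Dset_feistel subX subY XY rho0; have DX := Dset_feistel subY subX YX rho'0.
have [DE Ddiff] := feistel_round_trip rho0 rho'0 subX subY XY YX.
have [ED Ediff] := feistel_round_trip rho'0 rho0 subY subX YX XY.
rewrite DY -DX in ED Ediff.
have [Dc Ec] := (Dset_addr_closed subX, Eset_addr_closed subX).
have [I [DI lambdaI]] := spn_round_wall delta_lt_s round Dc Ec DE Ddiff.
have [I' [EI' _]] := spn_round_wall delta_lt_s round' Ec Dc ED Ediff.
have EX0 : Eset X != [set 0 : state b s].
  by rewrite -DY; exact: (Dset_feistel_neq0 delta_lt_s round subX subY XY X0).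
have DX0 : Dset X != [set 0 : state b s].
  by apply: contraNneq EX0 => D0; rewrite -DE D0 imset_set1 rho0.
have DXT : Dset X != setT.
  by apply: contraNneq XT => DT; apply/eqP/(subgroup_setT subX DT); rewrite -DE DT imset_permT.
have EXT : Eset X != setT.
  by apply: contraNneq XT => ET; apply/eqP/(subgroup_setT subX _ ET); rewrite -ED ET imset_permT.
apply: lambda_proper; exists I, I'; split; last split.
- exact: is_wall_index_wall DI DX0 DXT.
- exact: is_wall_index_wall EI' EX0 EXT.
by rewrite lambdaI EI'.
Qed.

Unset Implicit Arguments.

Theorem theorem4p11 (b s r delta : nat)
  (rho gamma lambda : nat -> {perm state b s})
  (U : nat -> {set state b s * state b s}) :
  (2 <= r)%N ->
  (0 < delta < s)%N ->
  (forall i, (1 <= i <= r)%N ->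
     [/\ rho i 0 = 0,
         rho i = (gamma i * lambda i)%g,
         parallel_with (gamma i)
           (fun f => weakly_uniform (2 ^ delta) f /\ strongly_anti_invariant delta f),
         is_linear (lambda i)
       & strongly_proper (lambda i)]) ->
  (forall i, (1 <= i <= r.+1)%N ->
     [/\ is_subgroup (U i), U i != [set (0 : state b s * state b s)] & U i != setT]) ->
  (forall i, (1 <= i <= r)%N ->
     part_image (rho i) (lin_part (U i)) = lin_part (U i.+1)) ->
  ~ [\/ exists i, (1 <= i <= r.-1)%N /\
                  part_image (rho i.+1) (lin_part (U i.+1)) = lin_part (U i),
        exists i, (1 <= i <= r.-1)%N /\
                  [/\ U i = setX (Aset (U i)) (Dset (U i)),
                      U i.+1 = setX (Aset (U i.+1)) (Dset (U i.+1))
                    & U i.+2 = setX (Aset (U i.+2)) (Dset (U i.+2))],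
        exists i, (1 <= i <= r)%N /\ Dset (U i) = [set (0 : state b s)] /\ Dset (U i.+1) = [set (0 : state b s)]
      | exists i, (1 <= i <= r)%N /\ Aset (U i) = [set (0 : state b s)] /\ Aset (U i.+1) = [set (0 : state b s)]].
Proof.
move=> r_ge2 /andP[_ delta_lt_s] round sub step.
have sub_in i : (1 <= i <= r)%N ->
    [/\ is_subgroup (U i), U i != [set 0 : state2 b s] & U i != setT].
  by move=> i_le; apply: sub; lia.
have subS i : (1 <= i <= r)%N -> is_subgroup (U i.+1).
  by move=> i_le; case: (sub i.+1); first lia.
have rho0 i : (1 <= i <= r)%N -> rho i 0 = 0 by case/round.
have no_back i : (1 <= i <= r.-1)%N ->
    part_image (rho i.+1) (lin_part (U i.+1)) = lin_part (U i) -> False.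
  move=> i_lt; have [i_le i1_le] : (1 <= i <= r)%N /\ (1 <= i.+1 <= r)%N by lia.
  have [subX X0 XT] := sub_in i i_le.
  exact: no_round_trip delta_lt_s (round i i_le) (round i.+1 i1_le) subX (subS i i_le)
    X0 XT (step i i_le).
case=> [[i [i_lt back]] | [i [i_lt [P0 P1 P2]]] | [i [i_le [_ D1]]] | [i [i_le [A0 A1]]]].
- exact: no_back i_lt back.
- apply: (no_back i i_lt); have [i_le i1_le] : (1 <= i <= r)%N /\ (1 <= i.+1 <= r)%N by lia.
  have [subX _ _] := sub_in i i_le; have [subY subZ] := (subS i i_le, subS i.+1 i1_le).
  have [A1 D1] := product_feistel subX subY (step i i_le) (rho0 i i_le) P0.
  have [A2 D2] := product_feistel subY subZ (step i.+1 i1_le) (rho0 i.+1 i1_le) P1.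
  suff -> : U i = U i.+2 by exact: step.
  by rewrite P2 A2 D2 A1 D1 -P0.
- have [subX X0 _] := sub_in i i_le.
  have := Dset_feistel_neq0 delta_lt_s (round i i_le) subX (subS i i_le) (step i i_le) X0.
  by rewrite D1 eqxx.
have [subX X0 _] := sub_in i i_le.
have := Aset0_feistel subX (subS i i_le) (step i i_le) (rho0 i i_le) A0 A1.
by move/eqP; rewrite (negPf X0).
Qed.
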